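(* Let $A=\{a_1,a_2,\dots,a_k\}$ be a set of $k$ distinct positive integers with $\gcd(a_1,\dots,a_k)=1$. Then, as $n\to\infty$, $$N^p_A(n)\sim\frac{1}{k!}\,\frac{\frac{1}{a_1}+\frac{1}{a_2}+\cdots+\frac{1}{a_k}}{a_1a_2\cdots a_k}\,n^k.$$
   Context: $N^p_A(n)$ is the total number of parts, summed over all partitions of $n$ (unordered sequences of positive integers summing to $n$) with all parts in $A$. *)

From mathcomp Require Import all_boot.
From Stdlib Require Import Reals.
From Coquelicot Require Import Coquelicot.

Set Implicit Arguments.
Unset Strict Implicit.
Unset Printing Implicit Defensive.

(* A partition of n with all parts in A = [:: a_0; ...; a_(k-1)] (distinct
   positive integers) is determined by its multiplicity vector m, with
   \sum_i m_i * a_i = n; its number of parts is \sum_i m_i.  Since every part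
   is >= 1, each multiplicity is <= n, so ranging m over 'I_n.+1 loses
   nothing. *)
Definition Np (A : seq nat) (n : nat) : nat :=
  (\sum_(m : {ffun 'I_(size A) -> 'I_n.+1}
          | \sum_(i < size A) (m i : nat) * nth 0%nat A i == n)
     \sum_(i < size A) (m i : nat))%nat.

Definition gcd_seq (A : seq nat) : nat := foldr gcdn 0%nat A.

Definition leading_const (A : seq nat) : R :=
  (/ INR ((size A)`!)) *
  (foldr (fun a s => / INR a + s) 0 A)%R /
  (foldr (fun a p => INR a * p) 1 A)%R.

(* Write C_A(N) for the number of multiplicity vectors of weight at most N and
   W_A(N) for their total number of parts, so that N^p_A is the sequence of
   increments of W_A.  Splitting off the multiplicity x of the first element a
   gives C_{a::A}(N) = sum_x C_A(N - x a) and
   W_{a::A}(N) = sum_x (x C_A(N - x a) + W_A(N - x a)); comparing such sums with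
   integrals shows, by induction on A, that C_A(N) and W_A(N) agree with
   N^k / (k! prod A) and c_A N^(k+1) / (k+1) (c_A the constant of the theorem)
   up to a bounded shift of N.  Since gcd A = 1, every large r is a nonnegative
   combination of A, and adding it to every partition of n shows
   N^p_A(n) <= N^p_A(n + r).  Averaging these quasi-monotone increments of W_A
   over windows of length sqrt N then gives N^p_A(N) ~ c_A N^k. *)

From mathcomp Require Import all_boot zify.
From Stdlib Require Import Reals Lra Psatz.
From Coquelicot Require Import Coquelicot.

Set Implicit Arguments.
Unset Strict Implicit.
Unset Printing Implicit Defensive.

Local Open Scope nat_scope.

(** * Multiplicity vectors *)

Section FfunCons.
Variables (T : finType) (k : nat).

Definition fcons (x : T) (g : {ffun 'I_k -> T}) : {ffun 'I_k.+1 -> T} :=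
  [ffun i => if unlift ord0 i is Some j then g j else x].

Lemma fcons0 x g : fcons x g ord0 = x.
Proof. by rewrite ffunE unlift_none. Qed.

Lemma fconsS x g j : fcons x g (lift ord0 j) = g j.
Proof. by rewrite ffunE liftK. Qed.

Lemma big_fcons (R : Type) (idx : R) (op : Monoid.com_law idx)
    (P : pred {ffun 'I_k.+1 -> T}) (F : {ffun 'I_k.+1 -> T} -> R) :
  \big[op/idx]_(f | P f) F f =
  \big[op/idx]_(x : T) \big[op/idx]_(g | P (fcons x g)) F (fcons x g).
Proof.
rewrite pair_big_dep /=.
rewrite (reindex (fun p : T * {ffun 'I_k -> T} => fcons p.1 p.2)) //.
exists (fun f : {ffun 'I_k.+1 -> T} => (f ord0, [ffun j => f (lift ord0 j)])) => [[x g] _ | f _] /=.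
  by rewrite fcons0; congr pair; apply/ffunP => j; rewrite ffunE fconsS.
by apply/ffunP => i; rewrite ffunE; case: unliftP => [j ->|->]; rewrite ?ffunE.
Qed.

End FfunCons.

Definition weight (A : seq nat) B (m : {ffun 'I_(size A) -> 'I_B}) : nat :=
  \sum_(i < size A) m i * nth 0 A i.
Arguments weight A {B} m.

Definition nparts k B (m : {ffun 'I_k -> 'I_B}) : nat := \sum_(i < k) m i.

Lemma weight_fcons a A B x (g : {ffun 'I_(size A) -> 'I_B}) :
  weight (a :: A) (fcons x g) = x * a + weight A g.
Proof.
by rewrite /weight big_ord_recl fcons0; congr addn; apply: eq_bigr => j _; rewrite fconsS.
Qed.

Lemma nparts_fcons k B x (g : {ffun 'I_k -> 'I_B}) : nparts (fcons x g) = x + nparts g.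
Proof.
by rewrite /nparts big_ord_recl fcons0; congr addn; apply: eq_bigr => j _; rewrite fconsS.
Qed.

Definition count_ffun_le A B N :=
  \sum_(m : {ffun 'I_(size A) -> 'I_B} | weight A m <= N) 1.
Definition parts_ffun_le A B N :=
  \sum_(m : {ffun 'I_(size A) -> 'I_B} | weight A m <= N) nparts m.
Definition parts_ffun_eq A B n :=
  \sum_(m : {ffun 'I_(size A) -> 'I_B} | weight A m == n) nparts m.

Definition stride_sum a (h : nat -> nat) N := \sum_(x < (N %/ a).+1) h (N - x * a).
Definition stride_wsum a (h : nat -> nat) N := \sum_(x < (N %/ a).+1) x * h (N - x * a).

Section StrideSums.
Variable a : nat.
Hypothesis a_gt0 : 0 < a.

Lemma divn_subn_succ N : a <= N -> N %/ a = ((N - a) %/ a).+1.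
Proof. by move=> aN; rewrite -{1}(subnK aN) -[X in _ + X]mul1n divnDMl // addn1. Qed.

Lemma stride_sum_rec h N :
  stride_sum a h N = h N + (if a <= N then stride_sum a h (N - a) else 0).
Proof.
rewrite /stride_sum big_ord_recl mul0n subn0; congr addn.
case: leqP => aN; last by rewrite divn_small ?big_ord0.
rewrite divn_subn_succ //; apply: eq_bigr => x _; congr h.
by rewrite lift0 mulSn subnDA.
Qed.

Lemma stride_wsum_rec h N : stride_wsum a h N =
  if a <= N then stride_wsum a h (N - a) + stride_sum a h (N - a) else 0.
Proof.
rewrite /stride_wsum big_ord_recl mul0n add0n.
case: leqP => aN; last by rewrite divn_small ?big_ord0.
rewrite divn_subn_succ // /stride_sum -big_split; apply: eq_bigr => x _ /=.
by rewrite /bump leq0n add1n !mulSn subnDA addnC.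
Qed.

Lemma stride_wsumE h N :
  stride_wsum a h N = if a <= N then stride_sum a (stride_sum a h) (N - a) else 0.
Proof.
elim/ltn_ind: N => N IH; rewrite stride_wsum_rec; case: ifP => // aN.
rewrite IH; last lia.
by rewrite [in RHS]stride_sum_rec addnC.
Qed.

End StrideSums.

(* Range-free forms of [count_ffun_le] and [parts_ffun_le], see [count_le_ffun]
   and [parts_le_ffun]. *)
Fixpoint count_le (A : seq nat) : nat -> nat :=
  if A is a :: A' then stride_sum a (count_le A') else fun _ => 1.

Fixpoint parts_le (A : seq nat) : nat -> nat :=
  if A is a :: A' then fun N => stride_wsum a (count_le A') N + stride_sum a (parts_le A') N
  else fun _ => 0.

Lemma big_ord_mul_le a N B (G : nat -> nat) : 0 < a -> N < B ->
  \sum_(x < B | x * a <= N) G x = \sum_(x < (N %/ a).+1) G x.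
Proof.
move=> a_gt0 NB; rewrite (big_ord_widen B G) ?(leq_ltn_trans (leq_div _ _)) //.
by apply: eq_bigl => x; rewrite ltnS leq_divRL.
Qed.

Lemma big_weight_le_cons a A B N (F : {ffun 'I_(size A).+1 -> 'I_B} -> nat) :
  \sum_(m | weight (a :: A) m <= N) F m =
  \sum_(x < B | x * a <= N) \sum_(g | weight A g <= N - x * a) F (fcons x g).
Proof.
rewrite big_fcons [RHS]big_mkcond; apply: eq_bigr => x _ /=.
case: leqP => xa.
  by apply: eq_bigl => g; rewrite weight_fcons -leq_subRL.
by rewrite big_pred0 // => g; rewrite weight_fcons; lia.
Qed.

Lemma count_le_ffun A B N : all (fun a => 0 < a) A -> N < B ->
  count_ffun_le A B N = count_le A N.
Proof.
elim: A N => [|a A IH] N /=.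
  move=> _ _; rewrite /count_ffun_le (eq_bigl xpredT) => [|g]; last by rewrite /weight big_ord0.
  by rewrite sum1_card card_ffun !card_ord.
case/andP=> a_gt0 A_gt0 NB; rewrite /count_ffun_le big_weight_le_cons.
rewrite (big_ord_mul_le (fun x => count_ffun_le A B (N - x * a))) //.
by apply: eq_bigr => x _; apply: IH => //; apply: leq_ltn_trans (leq_subr _ _) NB.
Qed.

Lemma parts_le_ffun A B N : all (fun a => 0 < a) A -> N < B ->
  parts_ffun_le A B N = parts_le A N.
Proof.
elim: A N => [|a A IH] N /=.
  by move=> _ _; rewrite /parts_ffun_le big1 // => g _; rewrite /nparts big_ord0.
case/andP=> a_gt0 A_gt0 NB; rewrite /parts_ffun_le big_weight_le_cons.
under eq_bigr => x _ do
  rewrite (eq_bigr _ (fun g _ => nparts_fcons x g)) big_split sum_nat_cond_const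
          -sum1dep_card mulnC.
rewrite big_split /= (big_ord_mul_le (fun x => x * count_ffun_le A B (N - x * a))) //.
rewrite (big_ord_mul_le (fun x => parts_ffun_le A B (N - x * a))) //.
congr addn; apply: eq_bigr => x _.
  by rewrite count_le_ffun ?(leq_ltn_trans (leq_subr _ _) NB).
by apply: IH => //; apply: leq_ltn_trans (leq_subr _ _) NB.
Qed.

Lemma parts_ffun_le_succ A B N :
  parts_ffun_le A B N.+1 = parts_ffun_le A B N + parts_ffun_eq A B N.+1.
Proof.
rewrite /parts_ffun_le (bigID (fun m => weight A m <= N)) /=.
congr addn; apply: eq_bigl => m.
  by rewrite andb_idl //; apply: leqW.
by rewrite -ltnNge -eqn_leq.
Qed.

Lemma parts_ffun_le0 A B : parts_ffun_le A B 0 = parts_ffun_eq A B 0.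
Proof. by apply: eq_bigl => m; rewrite leqn0. Qed.

Lemma parts_ffun_eq_Np A B n : all (fun a => 0 < a) A -> n < B ->
  parts_ffun_eq A B n = Np A n.
Proof.
move=> A_gt0 nB; change (Np A n) with (parts_ffun_eq A n.+1 n).
case: n nB => [|n] nB; first by rewrite -!parts_ffun_le0 !parts_le_ffun.
have := parts_ffun_le_succ A B n; rewrite !parts_le_ffun //; last exact: ltnW.
have := parts_ffun_le_succ A n.+2 n; rewrite !parts_le_ffun //.
by move=> -> /addnI.
Qed.

Lemma parts_le_succ A N : all (fun a => 0 < a) A ->
  parts_le A N.+1 = parts_le A N + Np A N.+1.
Proof.
move=> A_gt0; rewrite -!(parts_le_ffun (B := N.+2)) // parts_ffun_le_succ.
by rewrite parts_ffun_eq_Np.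
Qed.

(** * Representable integers *)

Lemma leq_sum_inj (I J : finType) (P : pred I) (Q : pred J) (h : I -> J)
    (F : I -> nat) (G : J -> nat) :
  {in P &, injective h} -> {in P, forall i, Q (h i)} ->
  {in P, forall i, F i <= G (h i)} ->
  \sum_(i | P i) F i <= \sum_(j | Q j) G j.
Proof.
move=> h_inj hPQ FG; apply: (@leq_trans (\sum_(i in P) G (h i))).
  by apply: leq_sum => i Pi; apply: FG.
rewrite -big_imset //; apply: (sub_le_big leqnn (fun x y => leq_addr y x)) => j.
by case/imsetP=> i Pi ->; apply: hPQ.
Qed.

Definition representable (A : seq nat) (r : nat) :=
  exists mm : seq nat, \sum_(i < size A) nth 0 mm i * nth 0 A i = r.

Lemma leq_Np_add A n r : all (fun a => 0 < a) A -> representable A r ->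
  Np A n <= Np A (n + r).
Proof.
move=> A_gt0 [mm mmA].
have term_le k (F : 'I_k -> nat) i : F i <= \sum_(j < k) F j.
  by rewrite (bigD1 i) //= leq_addr.
have A_pos (i : 'I_(size A)) : 0 < nth 0 A i by apply: (allP A_gt0); rewrite mem_nth.
set b := n + r.
rewrite -(parts_ffun_eq_Np (B := b.+1) (n := n)) ?ltnS ?leq_addr //.
rewrite -(parts_ffun_eq_Np (B := b.+1) (n := b)) //.
pose shift (g : {ffun 'I_(size A) -> 'I_b.+1}) :=
  [ffun i => inord (g i + nth 0 mm i) : 'I_b.+1].
have shiftE g i : weight A g == n -> shift g i = g i + nth 0 mm i :> nat.
  move=> /eqP wg; rewrite ffunE inordK // ltnS leq_add //.
    have := term_le _ (fun i => g i * nth 0 A i) i; rewrite -/(weight A g) wg.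
    by apply: leq_trans; rewrite leq_pmulr.
  have := term_le _ (fun i => nth 0 mm i * nth 0 A i) i; rewrite mmA.
  by apply: leq_trans; rewrite leq_pmulr.
apply: (leq_sum_inj (h := shift)) => [g1 g2 w1 w2 /ffunP eq12 | g wg | g wg].
- apply/ffunP => i; apply: val_inj; apply: (@addIn (nth 0 mm i)).
  by rewrite -!shiftE // eq12.
- apply/eqP; apply: (@etrans _ _ (weight A g + r)); last by rewrite (eqP wg).
  rewrite -mmA /weight -big_split /=.
  by apply: eq_bigr => i _; rewrite shiftE // mulnDl.
- by apply: leq_sum => i _; rewrite shiftE ?leq_addr.
Qed.

Lemma representable_cons a A x r : representable A r -> representable (a :: A) (x * a + r).
Proof. by case=> mm mmA; exists (x :: mm); rewrite big_ord_recl mmA. Qed.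

Lemma representable_gcd_multiples A : all (fun a => 0 < a) A ->
  exists F, forall t, F <= t -> representable A (t * gcd_seq A).
Proof.
elim: A => [|a A IH] /=.
  by move=> _; exists 0 => t _; exists [::]; rewrite big_ord0 muln0.
case/andP=> a_gt0 /IH[F' HF']; set g' := gcd_seq A.
have [g'0 | g'_gt0] := posnP g'.
  exists 0 => t _; rewrite g'0 gcdn0 -[t * a]addn0.
  by apply: representable_cons; exists [::]; rewrite big1 // => i _; rewrite nth_nil.
have [u v Huv _] := egcdnP g' a_gt0; set g := gcdn a g' in Huv *.
have g_gt0 : 0 < g by rewrite gcdn_gt0 a_gt0.
set d := g' %/ g.
have g'E : g' = d * g by rewrite divnK // dvdn_gcdr.
have d_gt0 : 0 < d by move: g'_gt0; rewrite g'E muln_gt0 => /andP[].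
(* With d = g' / g, write t = q d + s with s < d; then Bezout's u a = v g' + g
   gives t g = s u a + (q - s v) g'. *)
exists (d * (d * v + F')) => t Ht.
have tE := divn_eq t d; set q := t %/ d in tE Ht; set s := t %% d in tE.
have sd : s < d by rewrite ltn_pmod.
have qge : d * v + F' <= q by rewrite leq_divRL // mulnC.
have svq : s * v <= d * v by rewrite leq_mul2r ltnW ?orbT.
have rep := HF' (q - s * v) ltac:(lia).
rewrite (_ : t * g = s * u * a + (q - s * v) * g'); first exact: representable_cons.
move: Huv; rewrite tE g'E; clearbody q s d g; nia.
Qed.

Lemma representable_eventually A : all (fun a => 0 < a) A -> gcd_seq A = 1 ->
  exists F, forall r, F <= r -> representable A r.
Proof. by move=> /representable_gcd_multiples[F HF] g1; exists F => r /HF; rewrite g1 muln1. Qed.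

(** * Polynomial sandwiches *)

Local Open Scope R_scope.

Lemma INR_subn (m n : nat) : (n <= m)%nat -> INR (m - n) = INR m - INR n.
Proof. by move/leP=> nm; rewrite -minus_INR. Qed.

Lemma INR_gt0 (n : nat) : (0 < n)%nat -> 0 < INR n.
Proof. by move/ltP; apply: lt_0_INR. Qed.

Lemma pow_sub_ub m y z : 0 <= z <= y -> y ^ m.+1 - z ^ m.+1 <= INR m.+1 * (y - z) * y ^ m.
Proof.
move=> [z0 zy]; elim: m => [|m IH]; first by simpl; lra.
have zy_pow : z ^ m.+1 <= y ^ m.+1 by apply: pow_incr.
have := Rmult_le_compat_l y _ _ (Rle_trans _ _ _ z0 zy) IH.
rewrite S_INR; simpl in *; nra.
Qed.

Lemma pow_sub_lb m y z : 0 <= z <= y -> INR m.+1 * (y - z) * z ^ m <= y ^ m.+1 - z ^ m.+1.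
Proof.
move=> [z0 zy]; elim: m => [|m IH]; first by simpl; lra.
have zm0 : 0 <= z ^ m by apply: pow_le.
have := Rmult_le_compat_l z _ _ z0 IH.
have : 0 <= (y - z) * (y ^ m.+1 - z ^ m.+1).
  by apply: Rmult_le_pos; [lra | rewrite -Rminus_le_0; apply: pow_incr].
rewrite S_INR; simpl in *; nra.
Qed.

Section StrideSumBounds.
Variables (h : nat -> nat) (a m : nat) (c D : R).
Hypotheses (a_gt0 : (0 < a)%nat) (c_ge0 : 0 <= c) (D_ge0 : 0 <= D).

Let a_pos : 0 < INR a := INR_gt0 a_gt0.

Let K_ge0 : 0 <= c / (INR a * INR m.+1).
Proof. by apply: Rdiv_le_0_compat => //; apply: Rmult_lt_0_compat => //; apply: INR_gt0. Qed.

Let K_mul : c / (INR a * INR m.+1) * (INR m.+1 * INR a) = c.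
Proof. by field; split; [apply: not_0_INR | lra]. Qed.

Lemma stride_sum_ub : (forall n, INR (h n) <= c * (INR n + D) ^ m) ->
  forall N, INR (stride_sum a h N) <= c / (INR a * INR m.+1) * (INR N + D + INR a) ^ m.+1.
Proof.
move=> h_ub; move: K_ge0 K_mul; set K := c / _ => K0 KM.
elim/ltn_ind => N IH; rewrite stride_sum_rec // plus_INR.
set y := INR N + D.
have y_ge0 : 0 <= y by have := pos_INR N; rewrite /y; lra.
have yK_ge0 : 0 <= K * y ^ m.+1 by apply: Rmult_le_pos => //; apply: pow_le.
have := pow_sub_lb m (conj y_ge0 (ltac:(lra) : y <= y + INR a)).
rewrite Rplus_minus_l => /(Rmult_le_compat_l K _ _ K0); rewrite Rmult_minus_distr_l.
have -> : K * (INR m.+1 * INR a * y ^ m) = c * y ^ m by rewrite -KM; ring.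
have := h_ub N; rewrite -/y => hN.
case: ifP => aN; last by change (INR 0) with 0; lra.
have := IH (N - a)%nat ltac:(lia); rewrite INR_subn //.
by replace (INR N - INR a + D + INR a) with y by (rewrite /y; ring); lra.
Qed.

Lemma stride_sum_lb : (forall n, c * Rmax 0 (INR n - D) ^ m <= INR (h n)) ->
  forall N, c / (INR a * INR m.+1) * Rmax 0 (INR N - D) ^ m.+1 <= INR (stride_sum a h N).
Proof.
move=> h_lb; move: K_ge0 K_mul; set K := c / _ => K0 KM.
elim/ltn_ind => N IH; rewrite stride_sum_rec // plus_INR.
set y := Rmax 0 (INR N - D).
have y_ge0 : 0 <= y := Rmax_l _ _.
have cy : K * (INR m.+1 * INR a * y ^ m) = c * y ^ m by rewrite -KM; ring.
have := h_lb N; rewrite -/y => hN.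
have rest_ge0 := pos_INR (if (a <= N)%nat then stride_sum a h (N - a) else 0%nat).
case: (Rle_lt_dec y (INR a)) => ya.
  suff : K * (y * y ^ m) <= K * (INR m.+1 * INR a * y ^ m).
    by change (y ^ m.+1) with (y * y ^ m); lra.
  apply: Rmult_le_compat_l => //; apply: Rmult_le_compat_r; first exact: pow_le.
  by rewrite S_INR; have := pos_INR m; nra.
have yE : y = INR N - D by move: ya; rewrite /y /Rmax; case: Rle_dec => //; lra.
have aN : (a <= N)%nat by apply/leP; apply: INR_le; lra.
rewrite aN in rest_ge0 *.
have := IH (N - a)%nat ltac:(lia); rewrite INR_subn //.
have -> : Rmax 0 (INR N - INR a - D) = y - INR a by rewrite Rmax_right; lra.
have := pow_sub_ub m (conj (ltac:(lra) : 0 <= y - INR a) (ltac:(lra) : y - INR a <= y)).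
replace (y - (y - INR a)) with (INR a) by ring.
move=> /(Rmult_le_compat_l K _ _ K0); rewrite Rmult_minus_distr_l cy; lra.
Qed.
End StrideSumBounds.

Definition sandwich (f : nat -> nat) (c : R) (m : nat) : Prop :=
  0 <= c /\ exists2 D, 0 <= D & forall N,
    c * Rmax 0 (INR N - D) ^ m <= INR (f N) <= c * (INR N + D) ^ m.

Lemma scale_pow_le c x y m : 0 <= c -> 0 <= x <= y -> c * x ^ m <= c * y ^ m.
Proof. by move=> c0 xy; apply: Rmult_le_compat_l => //; apply: pow_incr. Qed.

Lemma Rmax0_le x y : x <= y -> 0 <= Rmax 0 x <= Rmax 0 y.
Proof. by move=> xy; split; [apply: Rmax_l | apply: Rle_max_compat_l]. Qed.

Lemma sandwich_ext f g c m : f =1 g -> sandwich f c m -> sandwich g c m.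
Proof. by move=> fg [c0 [D D0 fD]]; split => //; exists D => // N; rewrite -fg. Qed.

Lemma sandwich_add f g c d m :
  sandwich f c m -> sandwich g d m -> sandwich (fun N => f N + g N)%nat (c + d) m.
Proof.
move=> [c0 [D1 D10 fD]] [d0 [D2 D20 gD]]; split; first lra.
exists (D1 + D2) => [|N]; first lra.
have [f_lb f_ub] := fD N; have [g_lb g_ub] := gD N; have N0 := pos_INR N.
have := scale_pow_le m c0 (Rmax0_le (ltac:(lra) : INR N - (D1 + D2) <= INR N - D1)).
have := scale_pow_le m d0 (Rmax0_le (ltac:(lra) : INR N - (D1 + D2) <= INR N - D2)).
have := scale_pow_le m c0 (ltac:(lra) : 0 <= INR N + D1 <= INR N + (D1 + D2)).
have := scale_pow_le m d0 (ltac:(lra) : 0 <= INR N + D2 <= INR N + (D1 + D2)).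
rewrite plus_INR !Rmult_plus_distr_r; lra.
Qed.

Lemma sandwich_stride_sum h a c m : (0 < a)%nat -> sandwich h c m ->
  sandwich (stride_sum a h) (c / (INR a * INR m.+1)) m.+1.
Proof.
move=> a_gt0 [c0 [D D0 hD]].
have K0 : 0 <= c / (INR a * INR m.+1).
  by apply: Rdiv_le_0_compat => //; apply: Rmult_lt_0_compat; apply: INR_gt0.
split=> //; exists (D + INR a) => [|N]; first by have := pos_INR a; lra.
split; last by rewrite -Rplus_assoc; apply: stride_sum_ub => // n; case: (hD n).
apply: Rle_trans (stride_sum_lb a_gt0 c0 D0 (fun n => proj1 (hD n)) N).
by apply: scale_pow_le => //; apply: Rmax0_le; have := pos_INR a; lra.
Qed.

Lemma sandwich_shift f c a m : sandwich f c m.+1 ->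
  sandwich (fun N => if (a <= N)%nat then f (N - a)%nat else 0%nat) c m.+1.
Proof.
move=> [c0 [D D0 fD]]; split => //.
have a0 := pos_INR a; exists (D + INR a) => [|N]; first lra.
case: ifP => aN.
  have [f_lb f_ub] := fD (N - a)%nat; rewrite INR_subn // in f_lb f_ub.
  have aNR : INR a <= INR N by apply: le_INR; apply/leP.
  split; first by replace (INR N - (D + INR a)) with (INR N - INR a - D) by ring.
  by apply: Rle_trans f_ub _; apply: scale_pow_le => //; lra.
have Na : INR N < INR a by apply: lt_INR; apply/ltP; rewrite ltnNge aN.
rewrite Rmax_left ?pow_i; [|lia|lra]; change (INR 0) with 0; split; first lra.
by apply: Rmult_le_pos => //; apply: pow_le; have := pos_INR N; lra.
Qed.

Lemma sandwich_stride_wsum h a c m : (0 < a)%nat -> sandwich h c m ->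
  sandwich (stride_wsum a h) (c / (INR a * INR m.+1) / (INR a * INR m.+2)) m.+2.
Proof.
move=> a_gt0 hc; apply: (sandwich_ext (fun N => esym (stride_wsumE a_gt0 h N))).
exact: sandwich_shift (sandwich_stride_sum a_gt0 (sandwich_stride_sum a_gt0 hc)).
Qed.

Definition prodR (A : seq nat) : R := foldr (fun a p => INR a * p) 1 A.
Definition sum_invR (A : seq nat) : R := foldr (fun a s => / INR a + s) 0 A.

Lemma leading_constE A : leading_const A = / INR (size A)`! * sum_invR A / prodR A.
Proof. by []. Qed.

Lemma prodR_gt0 A : all (fun a => 0 < a)%nat A -> 0 < prodR A.
Proof.
elim: A => [|a A IH] /=; first lra.
by case/andP=> /INR_gt0 a0 /IH; rewrite /prodR /=; nra.
Qed.

Lemma sum_invR_ge0 A : all (fun a => 0 < a)%nat A -> 0 <= sum_invR A.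
Proof.
elim: A => [|a A IH] /=; first by rewrite /sum_invR /=; lra.
case/andP=> /INR_gt0/Rinv_0_lt_compat a0 /IH; rewrite /sum_invR /=; lra.
Qed.

Lemma leading_const_gt0 a A : all (fun a => 0 < a)%nat (a :: A) -> 0 < leading_const (a :: A).
Proof.
move=> A_gt0; have P0 := prodR_gt0 A_gt0.
have F0 := Rinv_0_lt_compat _ (INR_gt0 (fact_gt0 (size (a :: A)))).
case/andP: A_gt0 => /INR_gt0/Rinv_0_lt_compat a0 /sum_invR_ge0 S0.
rewrite leading_constE; apply: Rdiv_lt_0_compat => //; apply: Rmult_lt_0_compat => //.
by change (sum_invR (a :: A)) with (/ INR a + sum_invR A); lra.
Qed.

Lemma sandwich_count_le A : all (fun a => 0 < a)%nat A ->
  sandwich (count_le A) (/ (INR (size A)`! * prodR A)) (size A).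
Proof.
elim: A => [|a A IH].
  move=> _; rewrite /prodR /= Rmult_1_r Rinv_1; split; first lra.
  by exists 0 => [|N]; rewrite /=; lra.
case/andP=> a_gt0 A_gt0; have := sandwich_stride_sum a_gt0 (IH A_gt0).
have a0 := INR_gt0 a_gt0; have P0 := prodR_gt0 A_gt0.
have k0 := INR_gt0 (ltn0Sn (size A)); have F0 := INR_gt0 (fact_gt0 (size A)).
change (size (a :: A)) with (size A).+1; change (prodR (a :: A)) with (INR a * prodR A).
by congr sandwich; rewrite (factS (size A)) mult_INR; field; lra.
Qed.

Lemma sandwich_parts_le A : all (fun a => 0 < a)%nat A ->
  sandwich (parts_le A) (leading_const A / INR (size A).+1) (size A).+1.
Proof.
elim: A => [|a A IH].
  move=> _; have -> : leading_const [::] / INR 1 = 0 by rewrite /leading_const /=; field.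
  by split; [lra | exists 0 => [|N]; rewrite ?Rmult_0_l /=; lra].
case/andP=> a_gt0 A_gt0.
have := sandwich_add (sandwich_stride_wsum a_gt0 (sandwich_count_le A_gt0))
  (sandwich_stride_sum a_gt0 (IH A_gt0)).
have a0 := INR_gt0 a_gt0; have P0 := prodR_gt0 A_gt0.
have k0 := INR_gt0 (ltn0Sn (size A)); have k1 := INR_gt0 (ltn0Sn (size A).+1).
have F0 := INR_gt0 (fact_gt0 (size A)).
change (size (a :: A)) with (size A).+1; congr sandwich; rewrite !leading_constE.
change (size (a :: A)) with (size A).+1; change (prodR (a :: A)) with (INR a * prodR A).
change (sum_invR (a :: A)) with (/ INR a + sum_invR A).
by rewrite (factS (size A)) mult_INR; field; lra.
Qed.

(** * Increments of a quasi-monotone sequence *)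

Lemma Rdiv_pow x y k : y <> 0 -> (x / y) ^ k = x ^ k / y ^ k.
Proof. by move=> y0; rewrite /Rdiv Rpow_mult_distr pow_inv. Qed.

Lemma is_lim_seq_pow u (l : R) k : is_lim_seq u l -> is_lim_seq (fun n => u n ^ k) (l ^ k).
Proof.
by move=> ul; elim: k => [|k IH]; [exact: is_lim_seq_const | exact: is_lim_seq_mult' _ _ _ _ ul IH].
Qed.

Lemma is_lim_seq_one_plus_pow u v k : is_lim_seq u 0 -> is_lim_seq v 0 ->
  is_lim_seq (fun n => (1 + u n) * (1 + v n) ^ k) 1.
Proof.
move=> u0 v0; have one := is_lim_seq_const 1.
have := is_lim_seq_mult' _ _ _ _ (is_lim_seq_plus' _ _ _ _ one u0)
  (is_lim_seq_pow (k := k) (is_lim_seq_plus' _ _ _ _ one v0)).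
by rewrite Rplus_0_r pow1 Rmult_1_r.
Qed.

Lemma is_lim_seq_opp0 u : is_lim_seq u 0 -> is_lim_seq (fun n => - u n) 0.
Proof. by move=> u0; rewrite -[0]Ropp_0; apply: (proj1 (is_lim_seq_opp u 0)). Qed.

Lemma is_lim_seq_sqrt : is_lim_seq (fun n => INR (Nat.sqrt n)) p_infty.
Proof.
apply/is_lim_seq_spec => M; have [m Mm] := INR_archimed 1 M Rlt_0_1.
exists (m * m)%nat => n /Nat.sqrt_le_square mn.
by apply: Rlt_le_trans (le_INR _ _ mn); lra.
Qed.

Lemma is_lim_seq_div_sqrt c : is_lim_seq (fun n => c / INR (Nat.sqrt n)) 0.
Proof.
have := is_lim_seq_scal_l _ c _ (is_lim_seq_inv _ _ is_lim_seq_sqrt ltac:(discriminate)).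
by rewrite /= Rmult_0_r.
Qed.

Lemma is_lim_seq_sqrt_div : is_lim_seq (fun n => INR (Nat.sqrt n) / INR n) 0.
Proof.
apply: (is_lim_seq_le_le_loc _ _ _ _ _ (is_lim_seq_const 0) (is_lim_seq_div_sqrt 1)).
exists 1%nat => n n_ge1.
have /le_INR s1 : (1 <= Nat.sqrt n)%coq_nat by apply: (proj1 (Nat.sqrt_le_square _ _)); lia.
have /le_INR ss : (Nat.sqrt n * Nat.sqrt n <= n)%coq_nat := proj1 (Nat.sqrt_spec n (le_0_n n)).
change (INR 1) with 1 in s1; rewrite mult_INR in ss.
set s := INR (Nat.sqrt n) in s1 ss *; have sp : 0 < s by lra.
have n0 : 0 < INR n by nra.
split; first by apply: Rdiv_le_0_compat; lra.
apply: (Rmult_le_reg_r (INR n * s)); first exact: Rmult_lt_0_compat.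
have -> : s / INR n * (INR n * s) = s * s by field; lra.
have -> : 1 / s * (INR n * s) = INR n by field; lra.
exact: ss.
Qed.

Lemma is_lim_seq_shift_sqrt_div c : is_lim_seq (fun n => (c + INR (Nat.sqrt n)) / INR n) 0.
Proof.
have := is_lim_seq_scal_l _ c _ (is_lim_seq_inv _ _ is_lim_seq_INR ltac:(discriminate)).
rewrite /= Rmult_0_r => c_div.
have := is_lim_seq_plus' _ _ _ _ c_div is_lim_seq_sqrt_div; rewrite Rplus_0_r.
by apply: is_lim_seq_ext => n; rewrite /Rdiv; ring.
Qed.

Section QuasiMonotoneIncrements.
Variables (f W : nat -> nat) (w E : R) (k F : nat).
Hypotheses (w_gt0 : 0 < w) (E_ge0 : 0 <= E).
Hypothesis W_succ : forall N, W N.+1 = (W N + f N.+1)%nat.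
Hypothesis f_mono : forall n r, (F <= r)%nat -> (f n <= f (n + r))%nat.
Hypothesis W_bounds : forall N,
  w * Rmax 0 (INR N - E) ^ k.+1 <= INR (W N) <= w * (INR N + E) ^ k.+1.

Let ratio_den_gt0 N : 0 < INR N -> 0 < INR k.+1 * w * INR N ^ k.
Proof.
move=> N0; apply: Rmult_lt_0_compat; last exact: pow_lt.
by apply: Rmult_lt_0_compat => //; apply: INR_gt0.
Qed.

Lemma cumulative_window_lb N M : (W (N + F) + M * f N <= W (N + F + M))%nat.
Proof.
elim: M => [|M IH]; first by rewrite mul0n !addn0.
have := f_mono N (leqW (leq_addr M F)); rewrite addnS addnA.
by rewrite addnS W_succ mulSn; lia.
Qed.

Lemma cumulative_window_ub Y M N : (Y + M + F <= N)%nat -> (W (Y + M) <= W Y + M * f N)%nat.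
Proof.
elim: M => [|M IH] YMN; first by rewrite addn0 mul0n addn0.
have := f_mono (Y + M).+1 (_ : (F <= N - (Y + M).+1)%nat); rewrite subnKC; last by lia.
have := IH ltac:(lia); rewrite addnS W_succ mulSn; lia.
Qed.

Lemma increment_ratio_lb N M : (F + M <= N)%nat -> 2 * E < INR M ->
  (1 - 2 * E / INR M) * (1 - (INR F + INR M) / INR N) ^ k <=
  INR (f N) / (INR k.+1 * w * INR N ^ k).
Proof.
move=> FMN EM.
have /le_INR FMN_R : (F + M <= N)%coq_nat by apply/leP.
rewrite plus_INR in FMN_R; have F0 := pos_INR F.
have M0 : 0 < INR M by lra.
have N0 : 0 < INR N by lra.
set x := INR N - INR F - INR M.
have x0 : 0 <= x by rewrite /x; lra.
have key : INR k.+1 * w * ((INR M - 2 * E) * x ^ k) <= INR M * INR (f N).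
  have /leP/le_INR win := @cumulative_window_ub (N - F - M) M N ltac:(lia).
  rewrite (_ : (N - F - M + M = N - F)%nat) in win; last by lia.
  rewrite plus_INR mult_INR in win.
  have [lb _] := W_bounds (N - F); have [_ ub] := W_bounds (N - F - M).
  rewrite !INR_subn in lb ub win; try lia.
  set y := INR N - INR F - E in lb; set z := INR N - INR F - INR M + E in ub.
  rewrite Rmax_right in lb; last by rewrite /y; lra.
  have zy : 0 <= z <= y by rewrite /z /y; lra.
  have := pow_sub_lb k zy; rewrite (_ : y - z = INR M - 2 * E); last by rewrite /y /z; ring.
  move=> /(Rmult_le_compat_l w _ _ (Rlt_le _ _ w_gt0)) diff.
  have xz : x ^ k <= z ^ k by apply: pow_incr; rewrite /x /z; lra.
  have c0 : 0 <= INR k.+1 * w * (INR M - 2 * E).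
    by apply: Rmult_le_pos; [apply: Rmult_le_pos; [apply: pos_INR | lra] | lra].
  have := Rmult_le_compat_l _ _ _ c0 xz; lra.
have Nk0 : 0 < INR N ^ k by apply: pow_lt.
rewrite (_ : 1 - (INR F + INR M) / INR N = x / INR N); last by rewrite /x; field; lra.
rewrite Rdiv_pow; last lra.
have den0 := ratio_den_gt0 N0.
apply/(Rle_div_r _ _ _ den0).
have -> : (1 - 2 * E / INR M) * (x ^ k / INR N ^ k) * (INR k.+1 * w * INR N ^ k) =
  INR k.+1 * w * ((INR M - 2 * E) * x ^ k) / INR M by field; lra.
by apply/(Rle_div_l _ _ _ M0); rewrite [_ * INR M]Rmult_comm.
Qed.

Lemma increment_ratio_ub N M : (0 < M)%nat -> (0 < N)%nat ->
  INR (f N) / (INR k.+1 * w * INR N ^ k) <=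
  (1 + 2 * E / INR M) * (1 + (INR F + E + INR M) / INR N) ^ k.
Proof.
move=> /INR_gt0 M0 /INR_gt0 N0; have F0 := pos_INR F.
set y := INR N + INR F + INR M + E.
have key : INR M * INR (f N) <= INR k.+1 * w * ((INR M + 2 * E) * y ^ k).
  have /leP/le_INR win := cumulative_window_lb N M; rewrite !plus_INR mult_INR in win.
  have [lb _] := W_bounds (N + F); have [_ ub] := W_bounds (N + F + M).
  rewrite !plus_INR -/y in lb ub; set z := Rmax 0 (INR N + INR F - E) in lb.
  have zy : 0 <= z <= y by split; [apply: Rmax_l | apply: Rmax_lub; rewrite /y; lra].
  have := pow_sub_ub k zy => /(Rmult_le_compat_l w _ _ (Rlt_le _ _ w_gt0)) diff.
  have yz : y - z <= INR M + 2 * E by have := Rmax_r 0 (INR N + INR F - E); rewrite /y /z; lra.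
  have c0 : 0 <= INR k.+1 * w * y ^ k.
    by apply: Rmult_le_pos; [apply: Rmult_le_pos; [apply: pos_INR | lra] | apply: pow_le; lra].
  have := Rmult_le_compat_l _ _ _ c0 yz; lra.
have Nk0 : 0 < INR N ^ k by apply: pow_lt.
rewrite (_ : 1 + (INR F + E + INR M) / INR N = y / INR N); last by rewrite /y; field; lra.
rewrite Rdiv_pow; last lra.
have den0 := ratio_den_gt0 N0.
apply/(Rle_div_l _ _ _ den0).
have -> : (1 + 2 * E / INR M) * (y ^ k / INR N ^ k) * (INR k.+1 * w * INR N ^ k) =
  INR k.+1 * w * ((INR M + 2 * E) * y ^ k) / INR M by field; lra.
by apply/(Rle_div_r _ _ _ M0); rewrite Rmult_comm.
Qed.

Lemma is_lim_seq_increment_ratio :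
  is_lim_seq (fun N => INR (f N) / (INR k.+1 * w * INR N ^ k)) 1.
Proof.
(* Windows of length sqrt N: long enough for 2 E / sqrt N -> 0, short enough
   for sqrt N / N -> 0. *)
pose s N := INR (Nat.sqrt N).
apply: (is_lim_seq_le_le_loc
  (fun N => (1 - 2 * E / s N) * (1 - (INR F + s N) / INR N) ^ k) _
  (fun N => (1 + 2 * E / s N) * (1 + (INR F + E + s N) / INR N) ^ k)); last first.
- exact: (is_lim_seq_one_plus_pow (u := fun N => 2 * E / s N)
    (v := fun N => (INR F + E + s N) / INR N))
    (is_lim_seq_div_sqrt _) (is_lim_seq_shift_sqrt_div _).
- exact: (is_lim_seq_one_plus_pow (u := fun N => - (2 * E / s N))
    (v := fun N => - ((INR F + s N) / INR N)))
    (is_lim_seq_opp0 (is_lim_seq_div_sqrt _)) (is_lim_seq_opp0 (is_lim_seq_shift_sqrt_div _)).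
have [m Em] := INR_archimed 1 (2 * E) Rlt_0_1; rewrite Rmult_1_r in Em.
exists (m.+2 * m.+2 + 2 * F)%nat => N /leP N_ge; set M := Nat.sqrt N.
have mM : (m.+2 <= M)%nat by apply/leP; apply: (proj1 (Nat.sqrt_le_square _ _)); apply/leP; lia.
have MM : (M * M <= N)%nat by apply/leP; exact: (proj1 (Nat.sqrt_spec N (le_0_n N))).
have EM : 2 * E < INR M by apply: Rlt_le_trans Em (le_INR _ _ _); apply/leP; lia.
by split; [apply: increment_ratio_lb => //; nia | apply: increment_ratio_ub; lia].
Qed.

End QuasiMonotoneIncrements.

Theorem theorem8 (A : seq nat) :
  uniq A ->
  all (fun a => 0 < a)%nat A ->
  gcd_seq A = 1%nat ->
  is_lim_seq
    (fun n : nat => (INR (Np A n) / (leading_const A * INR n ^ size A))%R)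
    1%R.
Proof.
move=> _ A_gt0 gcdA.
have [F large_repr] := representable_eventually A_gt0 gcdA.
have [_ [E E_ge0 parts_bounds]] := sandwich_parts_le A_gt0.
have w_gt0 : 0 < leading_const A / INR (size A).+1.
  case: A A_gt0 gcdA {large_repr parts_bounds} => [//|a A'] A_gt0 _.
  exact: Rdiv_lt_0_compat (leading_const_gt0 A_gt0) (INR_gt0 (ltn0Sn _)).
have := is_lim_seq_increment_ratio w_gt0 E_ge0 (fun N => parts_le_succ N A_gt0)
  (fun n r Fr => leq_Np_add n A_gt0 (large_repr r Fr)) parts_bounds.
apply: is_lim_seq_ext => n; congr (_ / (_ * _)); field.
exact: not_0_INR.
Qed.
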